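(* Let $m\ge1$, let $\mathcal{I}\subseteq\mathcal{M}_m$ be a decreasing monomial set, and let $f=x_{i_1}x_{i_2}$ ($i_1<i_2$) and $g=x_{j_1}x_{j_2}$ ($j_1<j_2$) be monomials with $\gcd(f,g)=1$ and $i_2>j_2$. Then \[ |{\rm LTA}(m,2)\cdot f+{\rm LTA}(m,2)\cdot g|=\frac{|{\rm LTA}(m,2)\cdot f|\cdot |{\rm LTA}(m,2)\cdot g|}{2^{\alpha_{f,g}}}. \]
   Context: $\mathbf{R}_m=\mathbb{F}_2[x_0,\dots,x_{m-1}]/(x_0^2-x_0,\dots,x_{m-1}^2-x_{m-1})$; $\mathcal{M}_m$ is the set of monomials $x_0^{i_0}\cdots x_{m-1}^{i_{m-1}}$, $i_j\in\{0,1\}$; $\gcd$ of monomials is the monomial on the common variables. Order: $f\preceq_w g$ iff every variable of $f$ divides $g$; for equal-degree $f=x_{i_1}\cdots x_{i_s}$, $g=x_{j_1}\cdots x_{j_s}$ (increasing indices), $f\preceq_{sh}g$ iff $i_\ell\le j_\ell$ for all $\ell$; $f\preceq g$ iff $f\preceq_{sh}g^*\preceq_w g$ for some $g^*$; $\mathcal{I}$ is decreasing if $f\in\mathcal{I}$, $g\preceq f$ imply $g\in\mathcal{I}$. ${\rm LTA}(m,2)$ is the set of pairs $(\mathbf{B},\varepsilon)$ with $\mathbf{B}=(b_{i,j})\in\mathbb{F}_2^{m\times m}$ lower triangular with ones on the diagonal and $\varepsilon\in\mathbb{F}_2^m$; for a monomial $u$, $(\mathbf{B},\varepsilon)\cdot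 u\in\mathbf{R}_m$ is obtained by replacing each variable $x_i$ of $u$ by $x_i+\sum_{j<i}b_{i,j}x_j+\varepsilon_i$, and ${\rm LTA}(m,2)\cdot u$ is the set of all such polynomials. For sets $\mathcal{S},\mathcal{T}\subseteq\mathbf{R}_m$, $\mathcal{S}+\mathcal{T}=\{s+t:s\in\mathcal{S},t\in\mathcal{T}\}$. The degree of collision is $\alpha_{f,g}=0$ if $i_2>i_1>j_2>j_1$, $1$ if $i_2>j_2>i_1>j_1$, and $2$ if $i_2>j_2>j_1>i_1$. *)

From HB Require Import structures.
From mathcomp Require Import all_boot all_order all_algebra.
Set Implicit Arguments. Unset Strict Implicit. Unset Printing Implicit Defensive.
Import GRing.Theory.

(* R_m = F_2[x_0..x_{m-1}]/(x_i^2 - x_i) is represented through its monomial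
   basis: a monomial is the set of its variables ({set 'I_m}), an element of
   R_m is the (finite) set of monomials having coefficient 1. *)
Definition monom (m : nat) := {set 'I_m}.
Definition Rm (m : nat) := {set {set 'I_m}}.

Section Ring.
Variable m : nat.
Definition radd (p q : Rm m) : Rm m := (p :|: q) :\: (p :&: q).
Definition rzero : Rm m := set0.
Definition rone : Rm m := [set set0].
Definition rvar (i : 'I_m) : Rm m := [set [set i]].
Definition rconst (c : 'F_2) : Rm m := if c == 1%R then rone else rzero.
(* product: (x^a)(x^b) = x^(a ∪ b) since x_i^2 = x_i *)
Definition rmul (p q : Rm m) : Rm m :=
  \big[radd/rzero]_(a in p) \big[radd/rzero]_(b in q) [set a :|: b].

(* gcd of monomials: monomial on the common variables; 1 is the empty monomial *)
Definition mgcd (f g : monom m) : monom m := f :&: g.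

Definition mindices (f : monom m) : seq nat := sort leq (map val (enum f)).
Definition prec_w (f g : monom m) : bool := f \subset g.
Definition prec_sh (f g : monom m) : bool :=
  (#|f| == #|g|) &&
  [forall k : 'I_m, (k < #|f|) ==> (nth 0 (mindices f) k <= nth 0 (mindices g) k)].
Definition prec (f g : monom m) : Prop :=
  exists gs : monom m, prec_sh f gs /\ prec_w gs g.
Definition decreasing (I : {set monom m}) : Prop :=
  forall f g : monom m, f \in I -> prec g f -> g \in I.

Definition lta_var (B : 'M['F_2]_m) (e : 'rV['F_2]_m) (i : 'I_m) : Rm m :=
  radd (radd (rvar i) (\big[radd/rzero]_(j : 'I_m | j < i) rmul (rconst (B i j)) (rvar j)))
       (rconst (e ord0 i)).

Definition lta_act (B : 'M['F_2]_m) (e : 'rV['F_2]_m) (u : monom m) : Rm m :=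
  \big[rmul/rone]_(i in u) lta_var B e i.

Definition lta_orbit (u : monom m) : {set Rm m} :=
  [set lta_act BE.1 BE.2 u | BE in [set BE : 'M['F_2]_m * 'rV['F_2]_m |
      [forall i : 'I_m, BE.1 i i == 1%R] &&
      [forall i : 'I_m, forall j : 'I_m, (i < j) ==> (BE.1 i j == 0%R)]]].

Definition sumset (S T : {set Rm m}) : {set Rm m} :=
  [set radd st.1 st.2 | st in [set st : Rm m * Rm m | (st.1 \in S) && (st.2 \in T)]].
End Ring.

Definition mono2 (m : nat) (i j : 'I_m) : monom m := [set i; j].

(* degree of collision alpha_{f,g} for f = x_{i1}x_{i2}, g = x_{j1}x_{j2};
   cases: i2>i1>j2>j1 -> 0 ; i2>j2>i1>j1 -> 1 ; i2>j2>j1>i1 -> 2 *)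
Definition alpha (i1 i2 j1 j2 : nat) : nat :=
  if (j2 < i1) then 0 else if (j1 < i1) then 1 else 2.

From HB Require Import structures.
From mathcomp Require Import all_boot all_order all_algebra.
From mathcomp Require Import zify.
Set Implicit Arguments. Unset Strict Implicit. Unset Printing Implicit Defensive.
Import GRing.Theory Num.Theory.

(* Evaluating the elements of R_m at the points of F_2^m is injective (Moebius
   inversion).  Under evaluation, the orbit LTA(m,2).x_a x_b becomes the set of
   products L_a L_b of affine forms where L_i has leading variable x_i, and the
   sumset becomes the set of functions L1 L2 + L3 L4.  Both are counted through
   the fibres of these maps.  L1 L2 determines L1 (its derivative along x_b) and
   L2 up to L2 + r (L1 + 1), so every orbit has half as many elements as there
   are pairs of forms.  Taking successive derivatives of L1 L2 + L3 L4 along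
   x_i2, x_j2, x_j1 and x_i1 recovers the quadruple up to an explicit family of
   2^(2 + alpha) transformations, alpha counting the indices j1, j2 above i1;
   dividing gives the formula. *)

Section Evaluation.
Variable m : nat.
Implicit Types (p q : Rm m) (x : {set 'I_m}).

(* A point of F_2^m is encoded, like a monomial, by its support. *)
Definition peval x p : bool := \big[addb/false]_(a in p) (a \subset x).

Lemma big_addb_in (T : finType) (A : {pred T}) (F : T -> bool) :
  \big[addb/false]_(a in A) F a = \big[addb/false]_a ((a \in A) && F a).
Proof. by rewrite big_mkcond; apply: eq_bigr => a _; case: (a \in A). Qed.

Lemma peval_add x p q : peval x (radd p q) = peval x p (+) peval x q.
Proof.
rewrite /peval (big_addb_in (radd p q)) (big_addb_in p) (big_addb_in q) -big_split.
apply: eq_bigr => a _.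
by rewrite /radd !inE /=; case: (a \in p); case: (a \in q); case: (a \subset x).
Qed.

Lemma peval0 x : peval x (rzero m) = false.
Proof. by rewrite /peval big_set0. Qed.

Lemma peval1 x : peval x (rone m) = true.
Proof. by rewrite /peval big_set1 sub0set. Qed.

Lemma peval_var x i : peval x (rvar i) = (i \in x).
Proof. by rewrite /peval big_set1 sub1set. Qed.

Lemma peval_const x (c : 'F_2) : peval x (rconst m c) = (c == 1%R).
Proof. by rewrite /rconst; case: (c == 1%R); rewrite ?peval1 ?peval0. Qed.

Lemma peval_sum x (I : Type) (r : seq I) (P : pred I) (F : I -> Rm m) :
  peval x (\big[@radd m/rzero m]_(i <- r | P i) F i) =
  \big[addb/false]_(i <- r | P i) peval x (F i).
Proof. exact: (big_morph (peval x) (peval_add x) (peval0 x)). Qed.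

Lemma big_addb_andl (I : Type) (r : seq I) (P : pred I) (F : I -> bool) c :
  \big[addb/false]_(i <- r | P i) (c && F i) = c && \big[addb/false]_(i <- r | P i) F i.
Proof. by case: c => //; rewrite big1. Qed.

Lemma peval_mul x p q : peval x (rmul p q) = peval x p && peval x q.
Proof.
rewrite /rmul peval_sum {2}/peval andbC -big_addb_andl; apply: eq_bigr => a _.
rewrite peval_sum /peval andbC -big_addb_andl; apply: eq_bigr => b _.
by rewrite big_set1 subUset.
Qed.

Lemma peval_prod x (I : Type) (r : seq I) (P : pred I) (F : I -> Rm m) :
  peval x (\big[@rmul m/rone m]_(i <- r | P i) F i) =
  \big[andb/true]_(i <- r | P i) peval x (F i).
Proof. exact: (big_morph (peval x) (peval_mul x) (peval1 x)). Qed.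

(* If [a] is a monomial of [p + q] of minimal degree, no other monomial of
   [p + q] divides it, so [p + q] evaluates to [true] at the point [a]. *)
Lemma peval_inj p q : (forall x, peval x p = peval x q) -> p = q.
Proof.
move=> epq; suff /setP pq0 : radd p q = set0.
  by apply/setP => a; move: (pq0 a); rewrite !inE /=; case: (a \in p); case: (a \in q).
apply/eqP; apply: contraT => /set0Pn[a0 Ha0].
have [a Ha amin] := arg_minnP (fun a : {set 'I_m} => #|a|) Ha0.
move: (peval_add a p q); rewrite epq addbb /peval (bigD1 a) //= subxx big1 //.
move=> b /andP[Hb ba]; apply/negbTE/negP => ba'.
have : b \proper a by rewrite properEneq ba ba'.
by move/proper_card; rewrite ltnNge (amin b Hb).
Qed.

Definition pfun p : {ffun {set 'I_m} -> bool} := [ffun x => peval x p].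

Lemma pfun_inj : injective pfun.
Proof. by move=> p q /ffunP epq; apply: peval_inj => x; move: (epq x); rewrite !ffunE. Qed.

Lemma pfun_add p q : pfun (radd p q) = [ffun x => pfun p x (+) pfun q x].
Proof. by apply/ffunP => x; rewrite !ffunE peval_add. Qed.

End Evaluation.

Arguments pfun {m} p.

Section AffineForms.
Variable m : nat.

Definition aff := ({ffun 'I_m -> bool} * bool)%type.
Implicit Types (L M N : aff) (x : {set 'I_m}) (i j k : 'I_m).

Definition aeval L x : bool := L.2 (+) \big[addb/false]_(j in x) L.1 j.
Definition aadd L M : aff := ([ffun j => L.1 j (+) M.1 j], L.2 (+) M.2).
Definition ascale (b : bool) L : aff := ([ffun j => b && L.1 j], b && L.2).
Definition aone : aff := ([ffun => false], true).

Definition avar i : aff := ([ffun j => j == i], false).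

Definition flip x k := if k \in x then x :\ k else k |: x.

Lemma aevalD L M x : aeval (aadd L M) x = aeval L x (+) aeval M x.
Proof.
rewrite /aeval (eq_bigr (fun j => L.1 j (+) M.1 j)) => [|j _]; last by rewrite ffunE.
rewrite big_split /=.
by case: L.2; case: M.2; case: (\big[addb/false]_(j in x) L.1 j);
  case: (\big[addb/false]_(j in x) M.1 j).
Qed.

Lemma aevalZ b L x : aeval (ascale b L) x = b && aeval L x.
Proof.
rewrite /aeval; case: b => /=.
  by congr (_ (+) _); apply: eq_bigr => j _; rewrite ffunE.
by rewrite big1 // => j _; rewrite ffunE.
Qed.

Lemma aeval1 x : aeval aone x = true.
Proof. by rewrite /aeval big1 // => j _; rewrite ffunE. Qed.

Definition aevalE := (aevalD, aevalZ, aeval1).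

Lemma aeval_flip L x k : aeval L (flip x k) = aeval L x (+) L.1 k.
Proof.
rewrite /aeval /flip; case: ifP => xk.
  rewrite [in RHS](big_setD1 _ xk).
  by case: L.2; case: (L.1 k); case: (\big[addb/false]_(j in x :\ k) L.1 j).
rewrite big_setU1 ?xk //.
by case: L.2; case: (L.1 k); case: (\big[addb/false]_(j in x) L.1 j).
Qed.

Lemma aeval_inj L M : (forall x, aeval L x = aeval M x) -> L = M.
Proof.
case: L M => [v c] [v' c'] eLM.
have ec : c = c' by move: (eLM set0); rewrite /aeval !big_set0 !addbF.
congr pair => //; apply/ffunP => k.
move: (eLM [set k]); rewrite /aeval !big_set1 ec => {eLM ec}.
by case: c'; case: (v k); case: (v' k).
Qed.

Definition below (n : nat) L := [forall j, L.1 j ==> (j < n)].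
Definition lead_var i L := L.1 i && below i.+1 L.

Lemma lead_var_coef i L : lead_var i L -> L.1 i.
Proof. by case/andP. Qed.

Lemma lead_var_above i j L : lead_var i L -> i < j -> L.1 j = false.
Proof.
case/andP=> _ /forallP/(_ j) Lj ij; apply: contraTF Lj => ->.
by rewrite /= -leqNgt.
Qed.

Lemma below_lead_var i n L : lead_var i L -> i < n -> below n L.
Proof.
move=> Li lt_in; apply/forallP => j; apply/implyP => Lj.
by rewrite (leq_ltn_trans _ lt_in) // leqNgt; apply: contraTN Lj => /(lead_var_above Li) ->.
Qed.

Lemma belowD n L M : below n L -> below n M -> below n (aadd L M).
Proof.
move=> /forallP bL /forallP bM; apply/forallP => j; rewrite ffunE.
by move: (bL j) (bM j); case: (L.1 j); case: (M.1 j).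
Qed.

Lemma belowZ n b L : below n L -> below n (ascale b L).
Proof.
move=> /forallP bL; apply/forallP => j; rewrite ffunE.
by move: (bL j); case: b; case: (L.1 j).
Qed.

Lemma below0 n L : below n (ascale false L).
Proof. by apply/forallP => j; rewrite ffunE. Qed.

Lemma below1 n : below n aone.
Proof. by apply/forallP => j; rewrite ffunE. Qed.

Lemma below_leq n1 n2 L : n1 <= n2 -> below n1 L -> below n2 L.
Proof.
move=> le_n /forallP bL; apply/forallP => j.
by apply/implyP => /(implyP (bL j)) /leq_trans; apply.
Qed.

Lemma lead_var_avar i : lead_var i (avar i).
Proof.
rewrite /lead_var ffunE eqxx; apply/forallP => j; rewrite ffunE.
by apply/implyP => /eqP->.
Qed.

Lemma lead_varD i L M : lead_var i L -> below i M -> lead_var i (aadd L M).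
Proof.
case/andP=> Li bL bM; rewrite /lead_var ffunE Li.
have -> : M.1 i = false by apply: contraTF (forallP bM i) => ->; rewrite ltnn.
by rewrite belowD // (below_leq (leqnSn i)).
Qed.

(* If [L N = 0] then [N] vanishes where [L] is 1, and [N x + N (x + e_i)] is
   the coefficient [N_i], while [L] takes both values on [x, x + e_i]. *)
Lemma aeval_annihilator i L N : lead_var i L ->
  (forall x, aeval L x && aeval N x = false) ->
  forall x, aeval N x = N.1 i && ~~ aeval L x.
Proof.
move=> Li LN0 x; move: (LN0 x) (LN0 (flip x i)); rewrite !aeval_flip (lead_var_coef Li).
by case: (aeval L x); case: (aeval N x); case: (N.1 i).
Qed.

End AffineForms.

Ltac case_aeval := repeat match goal with
  | |- context [aeval ?L ?x] => case: (aeval L x)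
  | |- context [@fun_of_fin ?A ?B ?f ?j] => case: (@fun_of_fin A B f j)
  end.

Lemma card_fiber_param (T U : finType) (V : eqType) (D : {set T}) (F : T -> V)
    (P : {set U}) (g : U -> T) (X : T) :
  injective g -> (forall t, t \in P -> g t \in D /\ F (g t) = F X) ->
  (forall Y, Y \in D -> F Y = F X -> exists2 t, t \in P & Y = g t) ->
  #|[set Y in D | F Y == F X]| = #|P|.
Proof.
move=> g_inj gP fiber_g; rewrite -(card_imset _ g_inj); apply: eq_card => Y.
rewrite inE; apply/andP/imsetP => [[DY /eqP/(fiber_g _ DY)] //|].
by case=> t /gP[Dgt Fgt] ->; rewrite Dgt Fgt.
Qed.

Lemma card_uniform_fibers (T U : finType) (D : {set T}) (f : T -> U) n :
  (forall x, x \in D -> #|[set y in D | f y == f x]| = n) -> #|D| = #|f @: D| * n.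
Proof.
move=> fiber_n; rewrite -sum1_card (partition_big_imset f) -sum_nat_const.
apply: eq_bigr => _ /imsetP[x Dx ->].
by rewrite sum1dep_card -(fiber_n x Dx); apply: eq_card => y; rewrite !inE.
Qed.

Section Products.
Variable m : nat.
Local Notation aff := (aff m).
Implicit Types (a b k : 'I_m) (x : {set 'I_m}).

Definition aff2 := (aff * aff)%type.
Definition aff4 := (aff2 * aff2)%type.

Definition prod_eval (X : aff2) x := aeval X.1 x && aeval X.2 x.
Definition prod_fun (X : aff2) : {ffun {set 'I_m} -> bool} := [ffun x => prod_eval X x].
Definition sum_prod_eval (X : aff4) x := prod_eval X.1 x (+) prod_eval X.2 x.
Definition sum_prod_fun (X : aff4) : {ffun {set 'I_m} -> bool} :=
  [ffun x => sum_prod_eval X x].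

Lemma sum_prod_funE X1 X2 :
  sum_prod_fun (X1, X2) = [ffun x => prod_fun X1 x (+) prod_fun X2 x].
Proof. by apply/ffunP => x; rewrite !ffunE. Qed.

Definition lead_pairs a b : {set aff2} :=
  setX [set L | lead_var a L] [set L | lead_var b L].
Definition lead_quads (i1 i2 j1 j2 : 'I_m) : {set aff4} :=
  setX (lead_pairs i1 i2) (lead_pairs j1 j2).

Lemma lead_pairsE a b X : (X \in lead_pairs a b) = lead_var a X.1 && lead_var b X.2.
Proof. by rewrite !inE. Qed.

Lemma lead_quadsE (i1 i2 j1 j2 : 'I_m) X : (X \in lead_quads i1 i2 j1 j2) =
  [&& lead_var i1 X.1.1, lead_var i2 X.1.2, lead_var j1 X.2.1 & lead_var j2 X.2.2].
Proof. by rewrite !inE !andbA. Qed.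

Lemma prod_eval_flip X x k : prod_eval X (flip x k) =
  prod_eval X x (+) (X.1.1 k && aeval X.2 x) (+) (X.2.1 k && aeval X.1 x)
  (+) (X.1.1 k && X.2.1 k).
Proof.
rewrite /prod_eval !aeval_flip.
by case: (aeval X.1 x); case: (aeval X.2 x); case: (X.1.1 k); case: (X.2.1 k).
Qed.

(* [L1 (L1 + 1) = 0] pointwise. *)
Definition prod_twist (X : aff2) (r : bool) : aff2 :=
  (X.1, aadd X.2 (ascale r (aadd X.1 (aone m)))).

Lemma prod_eval_twist X r x : prod_eval (prod_twist X r) x = prod_eval X x.
Proof. by rewrite /prod_eval /= !aevalE; case_aeval; case: r. Qed.

Lemma prod_twist_inj a b X : X \in lead_pairs a b -> injective (prod_twist X).
Proof.
rewrite lead_pairsE => /andP[L1a _] r r' /(congr1 (fun Y : aff2 => Y.2.1 a)).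
by rewrite /= !ffunE /= (lead_var_coef L1a) !andbT => /addbI.
Qed.

Lemma prod_twist_lead a b X r : a < b -> X \in lead_pairs a b ->
  prod_twist X r \in lead_pairs a b.
Proof.
rewrite !lead_pairsE => ab /andP[L1a L2b] /=; rewrite L1a lead_varD //.
by apply/belowZ/belowD; [apply: below_lead_var L1a ab | apply: below1].
Qed.

(* The first factor is the derivative of [L1 L2] along [x_b]. *)
Lemma prod_fiber_twist a b X Y : a < b ->
  X \in lead_pairs a b -> Y \in lead_pairs a b ->
  prod_fun Y = prod_fun X -> exists2 r, r \in [set: bool] & Y = prod_twist X r.
Proof.
case: X Y => [L1 L2] [M1 M2] ab; rewrite !lead_pairsE /=.
move=> /andP[L1a L2b] /andP[M1a M2b] /ffunP eYX.
have {}eYX x : prod_eval (M1, M2) x = prod_eval (L1, L2) x.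
  by move: (eYX x); rewrite !ffunE.
have eM1 : M1 = L1.
  apply: aeval_inj => x; move: (eYX x) (eYX (flip x b)); rewrite !prod_eval_flip /=.
  rewrite (lead_var_above L1a ab) (lead_var_above M1a ab).
  by rewrite (lead_var_coef L2b) (lead_var_coef M2b) /prod_eval /=; case_aeval.
subst M1; pose N := aadd M2 L2.
have eN : forall x, aeval N x = N.1 a && ~~ aeval L1 x.
  apply: (aeval_annihilator L1a) => x.
  by move: (eYX x); rewrite /prod_eval /N aevalD /=; case_aeval.
exists (N.1 a) => //; congr pair; apply: aeval_inj => x.
by move: (eN x); rewrite /N !aevalE; case: (N.1 a); case_aeval.
Qed.

Lemma card_prod_fiber a b X : a < b -> X \in lead_pairs a b ->
  #|[set Y in lead_pairs a b | prod_fun Y == prod_fun X]| = 2.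
Proof.
move=> ab LX; rewrite (card_fiber_param (P := [set: bool]) (prod_twist_inj LX)).
- by rewrite cardsT card_bool.
- move=> r _; split; first exact: prod_twist_lead.
  by apply/ffunP => x; rewrite !ffunE prod_eval_twist.
- by move=> Y; apply: prod_fiber_twist.
Qed.

End Products.

Arguments prod_fun {m} X.
Arguments sum_prod_fun {m} X.

Definition twist_params (b1 b2 : bool) : {set bool * bool * bool * bool} :=
  setX (setX (setX [set s | s ==> b1] setT) [set q | q ==> b2]) setT.

Lemma card_implyb (b : bool) : #|[set s | s ==> b]| = 2 ^ b.
Proof.
case: b.
  by rewrite (_ : [set s | _] = setT) ?cardsT ?card_bool //; apply/setP => -[]; rewrite !inE.
by rewrite (_ : [set s | _] = [set false]) ?cards1 //; apply/setP => -[]; rewrite !inE.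
Qed.

Lemma card_twist_params b1 b2 : #|twist_params b1 b2| = 2 ^ (2 + b1 + b2).
Proof. by rewrite !cardsX !card_implyb cardsT card_bool !expnD; lia. Qed.

Lemma in_twist_params b1 b2 s p q r :
  ((s, p, q, r) \in twist_params b1 b2) = (s ==> b1) && (q ==> b2).
Proof. by rewrite !inE /= !andbT. Qed.

Section SumsOfProducts.
Variable m : nat.
Local Notation aff4 := (aff4 m).
Implicit Types (X Y : aff4) (x : {set 'I_m}).

(* With [L4' = L4 + p (L3 + 1) + q L1], one has [L3 L4' = L3 L4 + q L1 L3],
   and the [s]- and [r]-terms cancel in the sum since [L1 (L1 + 1) = 0]. *)
Definition sum_prod_twist X (t : bool * bool * bool * bool) : aff4 :=
  let: (s, p, q, r) := t in
  let: ((L1, L2), (L3, L4)) := X in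
  let L4' := aadd L4 (aadd (ascale p (aadd L3 (aone m))) (ascale q L1)) in
  ((L1, aadd L2 (aadd (ascale s L4')
                      (aadd (ascale q L3) (ascale r (aadd L1 (aone m)))))),
   (aadd L3 (ascale s L1), L4')).

Lemma sum_prod_eval_twist X t x :
  sum_prod_eval (sum_prod_twist X t) x = sum_prod_eval X x.
Proof.
case: X t => [[L1 L2] [L3 L4]] [[[s p] q] r].
by rewrite /sum_prod_eval /prod_eval /= !aevalE; case_aeval; case: s; case: p; case: q; case: r.
Qed.

Lemma sum_prod_twist_inj (i1 i2 j1 j2 : 'I_m) X :
  X \in lead_quads i1 i2 j1 j2 -> i1 != j1 -> injective (sum_prod_twist X).
Proof.
case: X => [[L1 L2] [L3 L4]]; rewrite lead_quadsE /= => /and4P[L1i1 _ L3j1 _] i1j1.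
have L1L3 : (L1.1 j1 && L3.1 i1) = false.
  case: (ltngtP i1 j1) => [lt|lt|/val_inj e]; last by rewrite e eqxx in i1j1.
  - by rewrite (lead_var_above L1i1 lt).
  - by rewrite (lead_var_above L3j1 lt) andbF.
move=> [[[s p] q] r] [[[s' p'] q'] r'] E.
have := congr1 (fun Y : aff4 => Y.2.1.1 i1) E.
rewrite /= !ffunE /= (lead_var_coef L1i1) !andbT => /addbI es; subst s'.
have := congr1 (fun Y : aff4 => Y.2.2.1 j1) E.
have := congr1 (fun Y : aff4 => Y.2.2.1 i1) E.
rewrite /= !ffunE /= (lead_var_coef L1i1) (lead_var_coef L3j1) !addbF.
move=> /addbI e3 /addbI e2.
have [ep eq] : p = p' /\ q = q'.
  by clear E; move: e2 e3 L1L3; case: (L1.1 j1); case: (L3.1 i1);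
    case: p; case: p'; case: q; case: q'.
subst p' q'.
have := congr1 (fun Y : aff4 => Y.1.2.1 i1) E.
by rewrite /= !ffunE /= (lead_var_coef L1i1) /= => /addbI/addbI/addbI; rewrite !andbT => ->.
Qed.

Lemma sum_prod_twist_lead (i1 i2 j1 j2 : 'I_m) X t : i1 < i2 -> j1 < j2 -> j2 < i2 ->
  X \in lead_quads i1 i2 j1 j2 -> t \in twist_params (i1 < j1) (i1 < j2) ->
  sum_prod_twist X t \in lead_quads i1 i2 j1 j2.
Proof.
case: X t => [[L1 L2] [L3 L4]] [[[s p] q] r] i1i2 j1j2 j2i2.
rewrite in_twist_params !lead_quadsE /= => /and4P[L1i1 L2i2 L3j1 L4j2].
move=> /andP[/implyP Ps /implyP Pq].
have L4'j2 : lead_var j2 (aadd L4 (aadd (ascale p (aadd L3 (aone m))) (ascale q L1))).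
  apply: lead_varD => //; apply: belowD.
    by apply/belowZ/belowD; [apply: below_lead_var L3j1 j1j2 | apply: below1].
  by case: q Pq => [Pq|_]; [apply/belowZ/(below_lead_var L1i1 (Pq isT)) | apply: below0].
apply/and4P; split => //.
- apply: lead_varD => //; apply: belowD.
    by case: s {Ps}; [apply/belowZ/(below_lead_var L4'j2 j2i2) | apply: below0].
  apply: belowD; first by apply/belowZ/(below_lead_var L3j1 (ltn_trans j1j2 j2i2)).
  by apply/belowZ/belowD; [apply: below_lead_var L1i1 i1i2 | apply: below1].
- apply: lead_varD => //.
  by case: s Ps => [Ps|_]; [apply/belowZ/(below_lead_var L1i1 (Ps isT)) | apply: below0].
Qed.

(* The first factor is the derivative of [L1 L2 + L3 L4] along [x_i2]. *)
Lemma sum_prod_first_factor (i1 i2 j1 j2 : 'I_m) X Y :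
  i1 < i2 -> j1 < i2 -> j2 < i2 ->
  X \in lead_quads i1 i2 j1 j2 -> Y \in lead_quads i1 i2 j1 j2 ->
  (forall x, sum_prod_eval Y x = sum_prod_eval X x) -> Y.1.1 = X.1.1.
Proof.
move=> i1i2 j1i2 j2i2; rewrite !lead_quadsE.
move=> /and4P[L1i1 L2i2 L3j1 L4j2] /and4P[M1i1 M2i2 M3j1 M4j2] eYX.
apply: aeval_inj => x; move: (eYX x) (eYX (flip x i2)).
rewrite /sum_prod_eval !prod_eval_flip (lead_var_coef L2i2) (lead_var_coef M2i2).
rewrite (lead_var_above L1i1 i1i2) (lead_var_above M1i1 i1i2).
rewrite (lead_var_above L3j1 j1i2) (lead_var_above M3j1 j1i2).
by rewrite (lead_var_above L4j2 j2i2) (lead_var_above M4j2 j2i2) /prod_eval; case_aeval.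
Qed.

Lemma sum_prod_third_factor (i1 i2 j1 j2 : 'I_m) X Y : i1 < j2 -> j1 < j2 ->
  X \in lead_quads i1 i2 j1 j2 -> Y \in lead_quads i1 i2 j1 j2 -> Y.1.1 = X.1.1 ->
  (forall x, sum_prod_eval Y x = sum_prod_eval X x) ->
  forall x, aeval Y.2.1 x = aeval X.2.1 x (+) ((X.1.2.1 j2 (+) Y.1.2.1 j2) && aeval X.1.1 x).
Proof.
move=> i1j2 j1j2; rewrite !lead_quadsE.
move=> /and4P[L1i1 _ L3j1 L4j2] /and4P[_ _ M3j1 M4j2] eM1 eYX x.
move: (eYX x) (eYX (flip x j2)); rewrite /sum_prod_eval !prod_eval_flip eM1.
rewrite (lead_var_above L1i1 i1j2) (lead_var_above L3j1 j1j2) (lead_var_above M3j1 j1j2).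
by rewrite (lead_var_coef L4j2) (lead_var_coef M4j2) /prod_eval; case_aeval.
Qed.

Lemma sum_prod_fiber_twist_disjoint (i1 i2 j1 j2 : 'I_m) X Y :
  j1 < j2 -> j2 < i1 -> i1 < i2 ->
  X \in lead_quads i1 i2 j1 j2 -> Y \in lead_quads i1 i2 j1 j2 ->
  (forall x, sum_prod_eval Y x = sum_prod_eval X x) ->
  exists2 t, t \in twist_params (i1 < j1) (i1 < j2) & Y = sum_prod_twist X t.
Proof.
move=> j1j2 j2i1 i1i2 LX LY eYX.
have j1i1 := ltn_trans j1j2 j2i1.
have eM1 := sum_prod_first_factor i1i2 (ltn_trans j1i1 i1i2) (ltn_trans j2i1 i1i2) LX LY eYX.
case: X Y LX LY eM1 eYX => [[L1 L2] [L3 L4]] [[M1 M2] [M3 M4]].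
rewrite !lead_quadsE /= => /and4P[L1i1 L2i2 L3j1 L4j2] /and4P[_ _ M3j1 M4j2] -> eYX.
pose r := L2.1 i1 (+) M2.1 i1.
have eM2 x : aeval M2 x = aeval L2 x (+) (r && ~~ aeval L1 x).
  move: (eYX x) (eYX (flip x i1)); rewrite /sum_prod_eval !prod_eval_flip /=.
  rewrite (lead_var_coef L1i1) (lead_var_above L3j1 j1i1) (lead_var_above M3j1 j1i1).
  by rewrite (lead_var_above L4j2 j2i1) (lead_var_above M4j2 j2i1) /prod_eval /r /=; case_aeval.
have [p _ [-> ->]] : exists2 p, p \in [set: bool] & (M3, M4) = prod_twist (L3, L4) p.
  apply: (prod_fiber_twist j1j2); rewrite ?lead_pairsE /= ?L3j1 ?L4j2 ?M3j1 ?M4j2 //.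
  apply/ffunP => x; rewrite !ffunE; move: (eYX x).
  by rewrite /sum_prod_eval /prod_eval /= eM2; case: (r); case_aeval.
exists (false, p, false, r); first by rewrite in_twist_params.
rewrite /sum_prod_twist /=; congr ((_, _), (_, _)).
- by apply: aeval_inj => x; rewrite eM2 !aevalE; case: (r); case_aeval.
- by apply: aeval_inj => x; rewrite !aevalE; case_aeval.
- by apply: aeval_inj => x; rewrite !aevalE; case: (p); case_aeval.
Qed.

Lemma sum_prod_fiber_twist_interleaved (i1 i2 j1 j2 : 'I_m) X Y :
  j1 < i1 -> i1 < j2 -> j2 < i2 ->
  X \in lead_quads i1 i2 j1 j2 -> Y \in lead_quads i1 i2 j1 j2 ->
  (forall x, sum_prod_eval Y x = sum_prod_eval X x) ->
  exists2 t, t \in twist_params (i1 < j1) (i1 < j2) & Y = sum_prod_twist X t.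
Proof.
move=> j1i1 i1j2 j2i2 LX LY eYX.
have j1j2 := ltn_trans j1i1 i1j2.
have eM1 := sum_prod_first_factor (ltn_trans i1j2 j2i2) (ltn_trans j1j2 j2i2) j2i2 LX LY eYX.
have eM3 := sum_prod_third_factor i1j2 j1j2 LX LY eM1 eYX.
case: X Y LX LY eM1 eYX eM3 => [[L1 L2] [L3 L4]] [[M1 M2] [M3 M4]].
rewrite !lead_quadsE /= => /and4P[L1i1 L2i2 L3j1 L4j2] /and4P[_ _ M3j1 _] -> eYX eM3.
have eM3' : M3 = L3.
  apply: aeval_inj => x; move: (eM3 x) (eM3 (flip x i1)); rewrite !aeval_flip.
  rewrite (lead_var_above L3j1 j1i1) (lead_var_above M3j1 j1i1) (lead_var_coef L1i1).
  by case_aeval.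
subst M3.
pose q := L4.1 i1 (+) M4.1 i1.
pose r := L2.1 i1 (+) M2.1 i1.
have eM2 x : aeval M2 x = aeval L2 x (+) (r && ~~ aeval L1 x) (+) (q && aeval L3 x).
  move: (eYX x) (eYX (flip x i1)); rewrite /sum_prod_eval !prod_eval_flip /=.
  rewrite (lead_var_coef L1i1) (lead_var_above L3j1 j1i1) /prod_eval /q /r /=.
  by case_aeval.
pose N := aadd M4 (aadd L4 (ascale q L1)).
have eN : forall x, aeval N x = N.1 j1 && ~~ aeval L3 x.
  apply: (aeval_annihilator L3j1) => x; move: (eYX x).
  rewrite /sum_prod_eval /prod_eval /N /= eM2 !aevalE.
  by case: (r); case: (q); case_aeval.
exists (false, N.1 j1, q, r); first by rewrite in_twist_params i1j2 implybT.
rewrite /sum_prod_twist /=; congr ((_, _), (_, _)).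
- by apply: aeval_inj => x; rewrite eM2 !aevalE; case: (r); case: (q); case_aeval.
- by apply: aeval_inj => x; rewrite !aevalE; case_aeval.
- apply: aeval_inj => x; move: (eN x); set p := N.1 j1; rewrite /N !aevalE.
  by case: (p); case: (q); case_aeval.
Qed.

Lemma sum_prod_fiber_twist_nested (i1 i2 j1 j2 : 'I_m) X Y :
  i1 < j1 -> j1 < j2 -> j2 < i2 ->
  X \in lead_quads i1 i2 j1 j2 -> Y \in lead_quads i1 i2 j1 j2 ->
  (forall x, sum_prod_eval Y x = sum_prod_eval X x) ->
  exists2 t, t \in twist_params (i1 < j1) (i1 < j2) & Y = sum_prod_twist X t.
Proof.
move=> i1j1 j1j2 j2i2 LX LY eYX.
have i1j2 := ltn_trans i1j1 j1j2.
have eM1 := sum_prod_first_factor (ltn_trans i1j2 j2i2) (ltn_trans j1j2 j2i2) j2i2 LX LY eYX.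
have eM3 := sum_prod_third_factor i1j2 j1j2 LX LY eM1 eYX.
case: X Y LX LY eM1 eYX eM3 => [[L1 L2] [L3 L4]] [[M1 M2] [M3 M4]].
rewrite !lead_quadsE /= => /and4P[L1i1 L2i2 L3j1 L4j2] /and4P[_ _ M3j1 _] -> eYX eM3.
pose s := L2.1 j2 (+) M2.1 j2.
have {}eM3 x : aeval M3 x = aeval L3 x (+) (s && aeval L1 x) := eM3 x.
pose p := L4.1 j1 (+) M4.1 j1.
pose q := L2.1 j1 (+) M2.1 j1 (+) (M4.1 j1 && s).
have eM4 x : aeval M4 x = aeval L4 x (+) (p && ~~ aeval L3 x) (+) (q && aeval L1 x).
  move: (eYX x) (eYX (flip x j1)); rewrite /sum_prod_eval !prod_eval_flip /=.
  rewrite (lead_var_above L1i1 i1j1) (lead_var_coef L3j1) (lead_var_coef M3j1).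
  by rewrite /prod_eval /= !eM3 /p /q /s; case_aeval.
pose N := aadd M2 (aadd L2 (aadd (ascale s M4) (ascale q L3))).
have eN : forall x, aeval N x = N.1 i1 && ~~ aeval L1 x.
  apply: (aeval_annihilator L1i1) => x; move: (eYX x).
  rewrite /sum_prod_eval /prod_eval /N /= eM3 !aevalE eM4.
  by case: (s); case: (p); case: (q); case_aeval.
have eM4' : M4 = aadd L4 (aadd (ascale p (aadd L3 (aone m))) (ascale q L1)).
  by apply: aeval_inj => x; rewrite eM4 !aevalE; case: (p); case: (q); case_aeval.
exists (s, p, q, N.1 i1); first by rewrite in_twist_params i1j1 i1j2 !implybT.
rewrite /sum_prod_twist /= -eM4'; congr ((_, _), (_, _)).
- apply: aeval_inj => x; move: (eN x); set r := N.1 i1; rewrite /N !aevalE.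
  by case: (r); case: (s); case: (q); case_aeval.
- by apply: aeval_inj => x; rewrite eM3 !aevalE.
Qed.

Lemma sum_prod_fiber_twist (i1 i2 j1 j2 : 'I_m) X Y :
  i1 < i2 -> j1 < j2 -> j2 < i2 -> i1 != j1 -> i1 != j2 ->
  X \in lead_quads i1 i2 j1 j2 -> Y \in lead_quads i1 i2 j1 j2 ->
  sum_prod_fun Y = sum_prod_fun X ->
  exists2 t, t \in twist_params (i1 < j1) (i1 < j2) & Y = sum_prod_twist X t.
Proof.
move=> i1i2 j1j2 j2i2 i1j1 i1j2 LX LY /ffunP eYX.
have {}eYX x : sum_prod_eval Y x = sum_prod_eval X x by move: (eYX x); rewrite !ffunE.
set b1 := i1 < j1; set b2 := i1 < j2.
case: (ltngtP j2 i1) => [j2i1 | lt_i1j2 | /val_inj e]; last by rewrite e eqxx in i1j2.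
  exact: sum_prod_fiber_twist_disjoint j1j2 j2i1 i1i2 LX LY eYX.
case: (ltngtP j1 i1) => [j1i1 | lt_i1j1 | /val_inj e]; last by rewrite e eqxx in i1j1.
  exact: sum_prod_fiber_twist_interleaved j1i1 lt_i1j2 j2i2 LX LY eYX.
exact: sum_prod_fiber_twist_nested lt_i1j1 j1j2 j2i2 LX LY eYX.
Qed.

Lemma card_sum_prod_fiber (i1 i2 j1 j2 : 'I_m) X :
  i1 < i2 -> j1 < j2 -> j2 < i2 -> i1 != j1 -> i1 != j2 ->
  X \in lead_quads i1 i2 j1 j2 ->
  #|[set Y in lead_quads i1 i2 j1 j2 | sum_prod_fun Y == sum_prod_fun X]| =
  2 ^ (2 + (i1 < j1) + (i1 < j2)).
Proof.
move=> i1i2 j1j2 j2i2 i1j1 i1j2 LX.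
rewrite -card_twist_params; apply: (card_fiber_param (sum_prod_twist_inj LX i1j1)).
- move=> t Pt; split; first exact: sum_prod_twist_lead.
  by apply/ffunP => x; rewrite !ffunE sum_prod_eval_twist.
- by move=> Y; apply: sum_prod_fiber_twist.
Qed.

End SumsOfProducts.

Section Orbits.
Variable m : nat.
Implicit Types (B : 'M['F_2]_m) (e : 'rV['F_2]_m) (a b i : 'I_m) (x : {set 'I_m}).

Definition lta_form B e i : aff m :=
  ([ffun j => (j == i) (+) ((j < i) && (B i j == 1%R))], e ord0 i == 1%R).

Lemma peval_lta_var B e i x : peval x (lta_var B e i) = aeval (lta_form B e i) x.
Proof.
rewrite /lta_var !peval_add peval_var peval_const peval_sum /aeval /=.
rewrite [X in _ = _ (+) X](eq_bigr (fun j => (j == i) (+) ((j < i) && (B i j == 1%R))));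
  last by move=> j _; rewrite ffunE.
rewrite big_split /=.
have -> : \big[addb/false]_(j in x) (j == i) = (i \in x).
  case: (boolP (i \in x)) => xi.
    rewrite (big_setD1 _ xi) eqxx big1 // => j; rewrite !inE => /andP[/negbTE] //.
  by rewrite big1 // => j xj; apply/negbTE; apply: contraNneq xi => <-.
have -> : \big[addb/false]_(j in x) ((j < i) && (B i j == 1%R)) =
          \big[addb/false]_(j < m | j < i) peval x (rmul (rconst m (B i j)) (rvar j)).
  rewrite big_mkcond [RHS]big_mkcond; apply: eq_bigr => j _.
  rewrite peval_mul peval_const peval_var.
  by case: (j \in x); case: (j < i); case: (B i j == 1%R).
by case: (i \in x); case: (e ord0 i == 1%R);
  case: (\big[addb/false]_(j < m | j < i) peval x (rmul (rconst m (B i j)) (rvar j))).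
Qed.

Lemma lead_var_lta_form B e i : lead_var i (lta_form B e i).
Proof.
rewrite /lead_var ffunE eqxx ltnn /=; apply/forallP => j; rewrite ffunE.
apply/implyP; apply: contraTT; rewrite -leqNgt => ij.
by rewrite (gtn_eqF ij : (j == i) = false) ltnNge (ltnW ij).
Qed.

Lemma peval_lta_act B e a b x : a != b ->
  peval x (lta_act B e (mono2 a b)) = prod_eval (lta_form B e a, lta_form B e b) x.
Proof.
move=> ab; rewrite /lta_act peval_prod /mono2 big_setU1 ?inE //= big_set1.
by rewrite !peval_lta_var.
Qed.

Lemma F2_natr_eq1 (c : bool) : ((c%:R : 'F_2) == 1)%R = c.
Proof. by case: c. Qed.

Definition lta_matrix (F : 'I_m -> aff m) : 'M['F_2]_m := (\matrix_(i, j) ((F i).1 j)%:R)%R.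
Definition lta_shift (F : 'I_m -> aff m) : 'rV['F_2]_m := (\row_i ((F i).2)%:R)%R.

Lemma lta_form_matrix F i : lead_var i (F i) ->
  lta_form (lta_matrix F) (lta_shift F) i = F i.
Proof.
move=> Fi; rewrite /lta_form mxE F2_natr_eq1 [RHS]surjective_pairing; congr pair.
apply/ffunP => j; rewrite !ffunE mxE F2_natr_eq1.
case: (ltngtP j i) => [ji|ij|/val_inj->].
- by rewrite (ltn_eqF ji : (j == i) = false).
- by rewrite (gtn_eqF ij : (j == i) = false) (lead_var_above Fi ij).
- by rewrite eqxx (lead_var_coef Fi).
Qed.

Lemma lta_matrix_act_in_orbit F u : (forall i, lead_var i (F i)) ->
  lta_act (lta_matrix F) (lta_shift F) u \in lta_orbit u.
Proof.
move=> Flead; apply/imsetP; exists (lta_matrix F, lta_shift F) => //.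
rewrite inE; apply/andP; split; apply/forallP => i.
  by rewrite mxE (lead_var_coef (Flead i)).
apply/forallP => j; apply/implyP => ij.
by rewrite mxE (lead_var_above (Flead i) ij).
Qed.

Lemma pfun_lta_orbit a b : a != b ->
  pfun @: lta_orbit (mono2 a b) = prod_fun @: lead_pairs a b.
Proof.
move=> ab; apply/setP => P; apply/imsetP/imsetP => -[].
- move=> _ /imsetP[[B e] _ ->] ->.
  exists (lta_form B e a, lta_form B e b); first by rewrite lead_pairsE !lead_var_lta_form.
  by apply/ffunP => x; rewrite !ffunE peval_lta_act.
- move=> [L1 L2]; rewrite lead_pairsE /= => /andP[L1a L2b] ->.
  pose F i := if i == a then L1 else if i == b then L2 else avar i.
  have Flead i : lead_var i (F i).
    rewrite /F; case: ifP => [/eqP-> //|_]; case: ifP => [/eqP-> //|_].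
    exact: lead_var_avar.
  exists (lta_act (lta_matrix F) (lta_shift F) (mono2 a b)).
    exact: lta_matrix_act_in_orbit.
  apply/ffunP => x; rewrite !ffunE peval_lta_act // !lta_form_matrix //.
  by rewrite /F !eqxx eq_sym (negbTE ab).
Qed.

Lemma pfun_sumset (i1 i2 j1 j2 : 'I_m) : i1 != i2 -> j1 != j2 ->
  pfun @: sumset (lta_orbit (mono2 i1 i2)) (lta_orbit (mono2 j1 j2)) =
  sum_prod_fun @: lead_quads i1 i2 j1 j2.
Proof.
move=> i12 j12; have /setP Ef := pfun_lta_orbit i12; have /setP Eg := pfun_lta_orbit j12.
apply/setP => P; apply/imsetP/imsetP => -[].
- move=> pq /imsetP[[p q]]; rewrite inE /= => /andP[Sp Sq] -> ->; rewrite pfun_add.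
  have /imsetP[X1 LX1 ->] : pfun p \in prod_fun @: lead_pairs i1 i2 by rewrite -Ef imset_f.
  have /imsetP[X2 LX2 ->] : pfun q \in prod_fun @: lead_pairs j1 j2 by rewrite -Eg imset_f.
  by exists (X1, X2); rewrite ?sum_prod_funE // /lead_quads in_setX LX1 LX2.
- move=> [X1 X2]; rewrite /lead_quads in_setX /= => /andP[LX1 LX2] ->.
  have /imsetP[p Sp eX1] : prod_fun X1 \in pfun @: lta_orbit (mono2 i1 i2).
    by rewrite Ef imset_f.
  have /imsetP[q Sq eX2] : prod_fun X2 \in pfun @: lta_orbit (mono2 j1 j2).
    by rewrite Eg imset_f.
  exists (radd p q); first by apply/imsetP; exists (p, q); rewrite // inE /= Sp Sq.
  by rewrite pfun_add -eX1 -eX2 sum_prod_funE.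
Qed.

Lemma card_lta_orbit a b : a < b -> #|lead_pairs a b| = #|lta_orbit (mono2 a b)| * 2.
Proof.
move=> ab; rewrite -(card_imset _ (@pfun_inj m)) pfun_lta_orbit ?neq_ltn ?ab //.
exact: card_uniform_fibers (fun X LX => card_prod_fiber ab LX).
Qed.

Lemma card_sumset (i1 i2 j1 j2 : 'I_m) :
  i1 < i2 -> j1 < j2 -> j2 < i2 -> i1 != j1 -> i1 != j2 ->
  #|lead_quads i1 i2 j1 j2| =
  #|sumset (lta_orbit (mono2 i1 i2)) (lta_orbit (mono2 j1 j2))|
  * 2 ^ (2 + (i1 < j1) + (i1 < j2)).
Proof.
move=> i1i2 j1j2 j2i2 i1j1 i1j2.
rewrite -(card_imset _ (@pfun_inj m)) pfun_sumset ?neq_ltn ?i1i2 ?j1j2 //.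
exact: card_uniform_fibers (fun X LX => card_sum_prod_fiber i1i2 j1j2 j2i2 i1j1 i1j2 LX).
Qed.

End Orbits.

Lemma alpha_count (i1 i2 j1 j2 : nat) : j1 < j2 -> i1 != j1 -> i1 != j2 ->
  alpha i1 i2 j1 j2 = (i1 < j1) + (i1 < j2).
Proof. by rewrite /alpha => ? /eqP ? /eqP ?; repeat case: ifP => ?; lia. Qed.

Theorem proposition1 (m : nat) (hm : 1 <= m) (I : {set monom m})
  (hI : decreasing I) (i1 i2 j1 j2 : 'I_m)
  (hi : i1 < i2) (hj : j1 < j2)
  (hgcd : mgcd (mono2 i1 i2) (mono2 j1 j2) = set0)
  (hij : j2 < i2) :
  (#|sumset (lta_orbit (mono2 i1 i2)) (lta_orbit (mono2 j1 j2))|%:R : rat)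
  = ((#|lta_orbit (mono2 i1 i2)| * #|lta_orbit (mono2 j1 j2)|)%:R
      / (2 ^ alpha i1 i2 j1 j2)%:R)%R.
Proof.
have disj k : k \in mono2 i1 i2 -> k \in mono2 j1 j2 -> False.
  by move=> kf kg; move/setP/(_ k): hgcd; rewrite /mgcd inE kf kg inE.
have i1j1 : i1 != j1 by apply/eqP => e; apply: (disj i1); rewrite !inE ?e eqxx ?orbT.
have i1j2 : i1 != j2 by apply/eqP => e; apply: (disj i1); rewrite !inE ?e eqxx ?orbT.
have count : (#|lta_orbit (mono2 i1 i2)| * #|lta_orbit (mono2 j1 j2)| =
    #|sumset (lta_orbit (mono2 i1 i2)) (lta_orbit (mono2 j1 j2))|
    * 2 ^ ((i1 < j1) + (i1 < j2)))%N.
  have := cardsX (lead_pairs i1 i2) (lead_pairs j1 j2).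
  rewrite -/(lead_quads i1 i2 j1 j2) (card_sumset hi hj hij i1j1 i1j2).
  rewrite (card_lta_orbit hi) (card_lta_orbit hj) -addnA expnD.
  have cancel4 s a b k : s * (2 ^ 2 * k) = a * 2 * (b * 2) -> a * b = s * k by lia.
  exact: cancel4.
by rewrite alpha_count // count natrM mulfK // pnatr_eq0 expn_eq0.
Qed.
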